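(* Let $x\in H$ with $\langle x,R_0x\rangle>0$. Then the random variables $A_k(\omega)=\langle x,\Delta_k(\omega)x\rangle$, $k\ge1$, are nonnegative and $\nu_x$-integrable, and $\langle x,R_0x\rangle=\mathbb E_{\nu_x}[\langle x,R_\infty(\omega)x\rangle]+\sum_{k=1}^\infty\mathbb E_{\nu_x}[A_k]$. In particular $\sum_{k=1}^\infty\mathbb E_{\nu_x}[A_k]=\langle x,R_0x\rangle-\mathbb E_{\nu_x}[\langle x,R_\infty(\omega)x\rangle]<\infty$.
   Context: Let $H$ be a complex Hilbert space, $m\ge2$, $P_1,\dots,P_m$ orthogonal projections on $H$, $R_0\in B(H)_+$. Let $\mathcal A=\{1,\dots,m\}$, $\mathcal W$ the set of finite words over $\mathcal A$ (including the empty word $\emptyset$); for nonempty $w=j_1\cdots j_n$, $w^-=j_1\cdots j_{n-1}$, and $wj$ is concatenation. WR energy tree: $R_\emptyset=R_0$, and for $w=j_1\cdots j_n$, $n\ge1$, $R_w=R_{w^-}^{1/2}(I-P_{j_n})R_{w^-}^{1/2}$, $D_w=R_{w^-}^{1/2}P_{j_n}R_{w^-}^{1/2}$. $\Omega=\mathcal A^{\mathbb N}$; for $\omega=(j_1,j_2,\dots)$, $\omega|_n=j_1\cdots j_n$, $\omega|_0=\emptyset$; cylinders $[w]=\{\omega:\omega|_{|w|}=w\}$. $R_\infty(\omega)$ is the strong limit of the Loewner-decreasing sequence $R_{\omega|_n}$. The step-$k$ dissipated operator along $\omega$ is $\Delta_k(\omega)=D_{\omega|_k}=R_{\omega|_{k-1}}^{1/2}P_{j_k}R_{\omega|_{k-1}}^{1/2}$.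 Energy-biased path measure: with $x$ fixed, $a_{wj}=\langle x,D_{wj}x\rangle$, a fixed probability vector $q$ on $\mathcal A$, $p_x(j\mid w)=a_{wj}/\sum_k a_{wk}$ if $\sum_ka_{wk}>0$ and $p_x(j\mid w)=q_j$ otherwise; $\nu_x$ is the unique Borel probability measure on $\Omega$ with $\nu_x([j_1\cdots j_n])=\prod_{i=1}^n p_x(j_i\mid j_1\cdots j_{i-1})$. *)

From HB Require Import structures.
From mathcomp Require Import all_boot all_order all_algebra.
From mathcomp Require Import complex.
From mathcomp Require Import all_classical all_reals all_analysis.
Import Order.TTheory GRing.Theory Num.Theory.

Set Implicit Arguments.
Unset Strict Implicit.
Unset Printing Implicit Defensive.

Local Open Scope ring_scope.
Local Open Scope classical_set_scope.

Section Hilbert.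
Variable R : realType.
Variable V : lmodType R[i].
Variable ip : V -> V -> R[i].

Definition is_inner_product : Prop :=
  [/\ (forall (u v w : V) (a : R[i]), ip u (a *: v + w) = a * ip u v + ip u w),
      (forall u v : V, ip v u = (ip u v)^*),
      (forall u : V, 0 <= ip u u) &
      (forall u : V, ip u u = 0 -> u = 0)].

Definition hnorm (v : V) : R := Num.sqrt (complex.Re (ip v v)).

Definition hcomplete : Prop :=
  forall u : nat -> V,
    (forall e : R, 0 < e -> exists N : nat, forall n k : nat,
        (N <= n)%N -> (N <= k)%N -> hnorm (u n - u k) < e) ->
    exists l : V, forall e : R, 0 < e -> exists N : nat, forall n : nat,
        (N <= n)%N -> hnorm (u n - l) < e.

Definition is_hilbert : Prop := is_inner_product /\ hcomplete.

Definition bounded_op (T : V -> V) : Prop :=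
  (forall (a : R[i]) (u v : V), T (a *: u + v) = a *: T u + T v) /\
  exists M : R, forall v : V, hnorm (T v) <= M * hnorm v.

(* T \in B(H)_+ : bounded and <v, T v> >= 0 (real, nonnegative) for all v *)
Definition positive_op (T : V -> V) : Prop :=
  bounded_op T /\ forall v : V, 0 <= ip v (T v).

Definition orth_proj (P : V -> V) : Prop :=
  [/\ bounded_op P, (forall v, P (P v) = P v) &
      (forall u v, ip (P u) v = ip u (P v))].

Definition is_pos_sqrt (A S : V -> V) : Prop :=
  positive_op S /\ forall v, S (S v) = A v.

(* A^{1/2}: the (unique) positive square root of A (for A positive it       *)
(* exists and is unique; the default value 0 is never used in that case).   *)
Definition opsqrt (A : V -> V) : V -> V :=
  match pselect (exists S, is_pos_sqrt A S) with
  | left h => proj1_sig (cid h)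
  | right _ => fun _ => 0
  end.

Definition strong_limit (T : nat -> V -> V) (L : V -> V) : Prop :=
  forall (v : V) (e : R), 0 < e -> exists N : nat, forall n : nat,
    (N <= n)%N -> hnorm (T n v - L v) < e.

(* the strong limit of T (default 0 if it does not exist) *)
Definition slim (T : nat -> V -> V) : V -> V :=
  match pselect (exists L, strong_limit T L) with
  | left h => proj1_sig (cid h)
  | right _ => fun _ => 0
  end.

(* Since w^- drops the LAST letter, we recurse on the reversed word.         *)
Variable m : nat.
Variable P : 'I_m -> V -> V.
Variable R0 : V -> V.

Fixpoint Rrev (l : seq 'I_m) : V -> V :=
  match l with
  | [::] => R0
  | j :: l' => let S := opsqrt (Rrev l') in fun v => S (S v - P j (S v))
  end.

(* R_w = R_{w^-}^{1/2} (I - P_{j_n}) R_{w^-}^{1/2},  R_emptyset = R0 *)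
Definition Rw (w : seq 'I_m) : V -> V := Rrev (rev w).

(* D_w = R_{w^-}^{1/2} P_{j_n} R_{w^-}^{1/2} (w nonempty; D_emptyset := 0, unused) *)
Definition Dw (w : seq 'I_m) : V -> V :=
  match rev w with
  | [::] => fun _ => 0
  | j :: l => let S := opsqrt (Rrev l) in fun v => S (P j (S v))
  end.

Definition prefix (om : nat -> 'I_m) (n : nat) : seq 'I_m := mkseq om n.

Definition Rinf (om : nat -> 'I_m) : V -> V := slim (fun n => Rw (prefix om n)).

Definition Delta (k : nat) (om : nat -> 'I_m) : V -> V := Dw (prefix om k).

Variable x : V.
Variable q : 'I_m -> R.

Definition aw (w : seq 'I_m) (j : 'I_m) : R := complex.Re (ip x (Dw (rcons w j) x)).

Definition px (w : seq 'I_m) (j : 'I_m) : R :=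
  let s := \sum_(k < m) aw w k in
  if 0 < s then aw w j / s else q j.

(* cylprob_rev l = prod_{i=1}^{n} p_x(j_i | j_1...j_{i-1}) for w = rev l *)
Fixpoint cylprob_rev (l : seq 'I_m) : R :=
  match l with
  | [::] => 1
  | j :: l' => cylprob_rev l' * px (rev l') j
  end.

Definition cylprob (w : seq 'I_m) : R := cylprob_rev (rev w).

End Hilbert.

(* Path space Omega = A^N for the alphabet A = 'I_(n.+2) (so m = n+2 >= 2),   *)
(* with the sigma-algebra generated by the cylinders (= Borel sigma-algebra  *)
(* of the product topology).                                                 *)
Definition Seqs (n : nat) := nat -> 'I_n.+2.
HB.instance Definition _ n := gen_eqMixin (Seqs n).
HB.instance Definition _ n := gen_choiceMixin (Seqs n).
HB.instance Definition _ n := isPointed.Build (Seqs n) (fun _ => ord0).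

Definition cylinder (n : nat) (w : seq 'I_n.+2) : set (Seqs n) :=
  [set om | prefix om (size w) = w].

Definition cylinders (n : nat) : set (set (Seqs n)) := range (@cylinder n).

Notation Omega n := (g_sigma_algebraType (@cylinders n)).

(* Writing [S] for the positive square root of [R_w], one step of the tree splits
   [R_w = S S] into the positive parts [R_wj = S (I - P_j) S] and
   [D_wj = S P_j S]. Along a path [omega] the energies
   [f_k = <x, R_(omega|k) x>] therefore decrease from [<x, R_0 x>] to
   [<x, R_oo(omega) x>] and [A_(k+1) = f_k - f_(k+1)]. The square roots exist
   because the Picard iterates of [Y = (B + Y^2)/2], [B = I - A/K] with
   [A <= K], are polynomials in [B] with nonnegative coefficients; they and the
   strong limit [R_oo] are obtained from the monotone convergence theorem for
   decreasing positive operators. Since [0 <= f_k <= <x, R_0 x>], dominated convergence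
   sums the telescoping series [sum_k E A_k] to [<x, R_0 x> - E <x, R_oo x>]
   for any probability measure on the paths. *)

From Pilot Require Import Defs.
From HB Require Import structures.
From mathcomp Require Import all_boot all_order all_algebra.
From mathcomp Require Import complex.
From mathcomp Require Import all_classical all_reals all_analysis.
From mathcomp Require Import ring lra.
Import Order.TTheory GRing.Theory Num.Theory.
Import numFieldNormedType.Exports.
Local Open Scope complex_scope.
Local Open Scope ring_scope.
Local Open Scope classical_set_scope.
Set Implicit Arguments.
Unset Strict Implicit.
Unset Printing Implicit Defensive.

Local Notation prefix := Defs.prefix.

Section ComplexFacts.
Variable R : realType.
Local Notation C := R[i].
Implicit Types (a z : C) (r : R).

Lemma ger0_Re z : 0 <= z -> 0 <= complex.Re z.
Proof. by rewrite lecE => /andP[]. Qed.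

Lemma ger0_realE z : 0 <= z -> z = (complex.Re z)%:C.
Proof. by case: z => a b /ger0_Im /= ->. Qed.

Lemma conjcR r : (r%:C)^* = r%:C :> C.
Proof. exact: conjc_real. Qed.

Lemma Re_realM r z : complex.Re (r%:C * z) = r * complex.Re z.
Proof. by case: z => a b /=; rewrite mul0r subr0. Qed.

Lemma Re_mulcJ a : complex.Re (a * a^*) = complex.Re a ^+ 2 + complex.Im a ^+ 2.
Proof. by case: a => u v /=; rewrite mulrN opprK !expr2. Qed.

Lemma Re_mulcJ_ge0 a : 0 <= complex.Re (a * a^*).
Proof. by rewrite Re_mulcJ addr_ge0 // sqr_ge0. Qed.

Lemma sqrRe_le_Re_mulcJ a : complex.Re a ^+ 2 <= complex.Re (a * a^*).
Proof. by rewrite Re_mulcJ lerDl sqr_ge0. Qed.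

Lemma sqrIm_le_Re_mulcJ a : complex.Im a ^+ 2 <= complex.Re (a * a^*).
Proof. by rewrite Re_mulcJ lerDr sqr_ge0. Qed.

Lemma Re_mulcJN a : complex.Re (- a * (- a)^*) = complex.Re (a * a^*).
Proof. by rewrite raddfN mulrNN. Qed.

(* The nonnegative cone of [C] is closed; [Re (a * a^* )] stands for [|a|^2]. *)
Lemma ger0_approx w :
  (forall e : R, 0 < e -> exists2 z, 0 <= z & complex.Re ((z - w) * (z - w)^*) < e) ->
  0 <= w.
Proof.
move=> h; rewrite lecE /=.
have -> : complex.Im w == 0.
  apply/negPn/negP => hn.
  have e0 : 0 < complex.Im w ^+ 2 by rewrite lt_def sqr_ge0 sqrf_eq0 hn.
  have [z /ger0_Im z0 hz] := h _ e0.
  by have := sqrIm_le_Re_mulcJ (z - w); rewrite raddfB /= z0 sub0r sqrrN; lra.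
rewrite leNgt; apply/negP => hn.
have e0 : 0 < complex.Re w ^+ 2 by rewrite lt_def sqr_ge0 sqrf_eq0 (lt_eqF hn).
have [z /ger0_Re z0 hz] := h _ e0.
by have := sqrRe_le_Re_mulcJ (z - w); rewrite raddfB /=; nra.
Qed.

End ComplexFacts.

Lemma le_mul_of_quadratic_ge0 (R : realFieldType) (F G N : R) :
  0 <= F -> 0 <= G -> 0 <= N ->
  (forall t, 0 <= F - 2 * t * N + t ^+ 2 * N * G) -> N <= F * G.
Proof.
move=> F0 G0 N0 h.
have [GE|Gn] := eqVneq G 0.
  rewrite GE mulr0; have [->|Nn] := eqVneq N 0; first by [].
  have := h ((F + 1) / (2 * N)); rewrite GE mulr0 addr0.
  have -> : 2 * ((F + 1) / (2 * N)) * N = F + 1 by field; rewrite ?pnatr_eq0 ?Nn.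
  lra.
have Gp : 0 < G by rewrite lt_def Gn G0.
have := h G^-1.
have -> : F - 2 * G^-1 * N + G^-1 ^+ 2 * N * G = (F * G - N) / G by field.
by rewrite pmulr_lge0 ?invr_gt0 // subr_ge0.
Qed.

Section Sesquilinear.
Variable R : realType.
Local Notation C := R[i].
Variable V : lmodType C.
Variable f : V -> V -> C.
Hypothesis fL : forall u a v w, f u (a *: v + w) = a * f u v + f u w.
Hypothesis fJ : forall u v, f v u = (f u v)^*.

Lemma form0r u : f u 0 = 0.
Proof.
by apply: (addrI (f u 0)); rewrite -{1}[f u 0]mul1r -fL scale1r !addr0.
Qed.

Lemma formDr u v w : f u (v + w) = f u v + f u w.
Proof. by rewrite -{1}[v]scale1r fL mul1r. Qed.

Lemma formZr u a v : f u (a *: v) = a * f u v.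
Proof. by rewrite -[a *: v]addr0 fL form0r addr0. Qed.

Lemma formNr u v : f u (- v) = - f u v.
Proof. by rewrite -scaleN1r formZr mulN1r. Qed.

Lemma formBr u v w : f u (v - w) = f u v - f u w.
Proof. by rewrite formDr formNr. Qed.

Lemma formDl u v w : f (v + w) u = f v u + f w u.
Proof. by rewrite (fJ u (v + w)) (fJ u v) (fJ u w) formDr; exact: rmorphD. Qed.

Lemma formZl u a v : f (a *: v) u = a^* * f v u.
Proof. by rewrite (fJ u (a *: v)) (fJ u v) formZr; exact: rmorphM. Qed.

Lemma formNl u v : f (- v) u = - f v u.
Proof. by rewrite (fJ u (- v)) (fJ u v) formNr; exact: rmorphN. Qed.

Lemma form_sumr u I (r : seq I) (P : pred I) (F : I -> V) :
  f u (\sum_(i <- r | P i) F i) = \sum_(i <- r | P i) f u (F i).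
Proof. by apply: (big_morph (f u)); [exact: formDr | exact: form0r]. Qed.

Hypothesis fP : forall u, 0 <= f u u.

Lemma form_cauchy_schwarz u v :
  complex.Re (f u v * (f u v)^*) <= complex.Re (f u u) * complex.Re (f v v).
Proof.
set a := f u v.
apply: le_mul_of_quadratic_ge0; [exact: ger0_Re | exact: ger0_Re | exact: Re_mulcJ_ge0 |].
move=> t; have := fP (u + (- (t%:C * a^*)) *: v).
rewrite formDl !formDr !formZr !formZl (fJ u v) -/a lecE => /andP[_].
rewrite (ger0_realE (fP u)) (ger0_realE (fP v)).
case: a => ar ai /= h; apply: (le_trans h).
by rewrite -!expr2 le_eqVlt; apply/orP; left; apply/eqP; ring.
Qed.

End Sesquilinear.

Lemma nonincreasing_cauchy (R : realType) (u : nat -> R) :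
  (forall k, u k.+1 <= u k) -> (forall k, 0 <= u k) ->
  forall e, 0 < e -> exists N, forall k j, (N <= k)%N -> (N <= j)%N -> `|u k - u j| < e.
Proof.
move=> hd h0 e e0.
have lb : has_lbound (range u) by exists 0 => y [k _ <-]; exact: h0.
have /cvgrPdist_lt cv := nonincreasing_cvgn (proj1 (nonincreasing_seqP u) hd) lb.
have e2 : 0 < e / 2 by rewrite divr_gt0.
have [N _ hN] := cv _ e2; exists N => k j hk hj.
have := hN k hk; have := hN j hj; set l := inf _ => a b.
rewrite (_ : u k - u j = (l - u j) - (l - u k)); last by ring.
by apply: (le_lt_trans (ler_normB _ _)); lra.
Qed.

Section SqrtIteration.
Variable R : realFieldType.

(* Evaluated at [I - A], [sqrt_iter k] increases to [I - A^(1/2)]. *)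
Fixpoint sqrt_iter (k : nat) : {poly R} :=
  if k is k'.+1 then 2^-1 *: ('X + sqrt_iter k' * sqrt_iter k') else 0.

Definition coef_ge0 (p : {poly R}) := forall i, 0 <= p`_i.

Lemma coef_ge0D p q : coef_ge0 p -> coef_ge0 q -> coef_ge0 (p + q).
Proof. by move=> hp hq i; rewrite coefD addr_ge0. Qed.

Lemma coef_ge0M p q : coef_ge0 p -> coef_ge0 q -> coef_ge0 (p * q).
Proof. by move=> hp hq i; rewrite coefM sumr_ge0 // => j _; rewrite mulr_ge0. Qed.

Lemma coef_ge0Z c p : 0 <= c -> coef_ge0 p -> coef_ge0 (c *: p).
Proof. by move=> hc hp i; rewrite coefZ mulr_ge0. Qed.

Lemma coef_ge0X : coef_ge0 'X.
Proof. by move=> i; rewrite coefX ler0n. Qed.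

Lemma sqrt_iter_ge0 k : coef_ge0 (sqrt_iter k).
Proof.
elim: k => [i|k IH] /=; first by rewrite coef0.
apply: coef_ge0Z; first by rewrite invr_ge0 ler0n.
by apply: coef_ge0D; [exact: coef_ge0X | exact: coef_ge0M].
Qed.

(* [p_(k+2) - p_(k+1) = (p_(k+1) - p_k) (p_(k+1) + p_k) / 2] *)
Lemma sqrt_iterS_sub_ge0 k : coef_ge0 (sqrt_iter k.+1 - sqrt_iter k).
Proof.
elim: k => [|k IH].
  by rewrite /= subr0 mul0r addr0; apply: coef_ge0Z; [rewrite invr_ge0 ler0n | exact: coef_ge0X].
have -> : sqrt_iter k.+2 - sqrt_iter k.+1 =
    2^-1 *: ((sqrt_iter k.+1 - sqrt_iter k) * (sqrt_iter k.+1 + sqrt_iter k)).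
  have E : sqrt_iter k.+1 = 2^-1 *: ('X + sqrt_iter k * sqrt_iter k) by [].
  rewrite [sqrt_iter k.+2]/= [in LHS]E -scalerBr; congr (_ *: _).
  by rewrite [in RHS]E -!mul_polyC; ring.
apply: coef_ge0Z; first by rewrite invr_ge0 ler0n.
by apply: coef_ge0M => //; apply: coef_ge0D; exact: sqrt_iter_ge0.
Qed.

End SqrtIteration.

Section HilbertSpace.
Variable R : realType.
Local Notation C := R[i].
Variable V : lmodType C.
Variable ip : V -> V -> C.
Hypothesis hip : is_inner_product ip.

Let ipL : forall u a v w, ip u (a *: v + w) = a * ip u v + ip u w.
Proof. by case: hip. Qed.
Let ipJ : forall u v, ip v u = (ip u v)^*.
Proof. by case: hip. Qed.
Let ip_ge0 : forall u, 0 <= ip u u.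
Proof. by case: hip. Qed.
Let ip_eq0 : forall u, ip u u = 0 -> u = 0.
Proof. by case: hip. Qed.

Definition nrm2 (v : V) : R := complex.Re (ip v v).

Lemma ip_selfE v : ip v v = (nrm2 v)%:C.
Proof. exact: ger0_realE. Qed.

Lemma nrm2_ge0 v : 0 <= nrm2 v.
Proof. exact: ger0_Re. Qed.

Lemma nrm2_eq0 v : nrm2 v = 0 -> v = 0.
Proof. by move=> h; apply: ip_eq0; rewrite ip_selfE h. Qed.

Lemma nrm2N v : nrm2 (- v) = nrm2 v.
Proof. by rewrite /nrm2 (formNl ipL ipJ) (formNr ipL) opprK. Qed.

Lemma nrm2_subC u v : nrm2 (u - v) = nrm2 (v - u).
Proof. by rewrite -nrm2N opprB. Qed.

Lemma nrm2Z a v : nrm2 (a *: v) = complex.Re (a * a^*) * nrm2 v.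
Proof.
rewrite /nrm2 (formZl ipL ipJ) (formZr ipL) ip_selfE mulrA [a^* * a]mulrC.
by rewrite [_ * (nrm2 v)%:C]mulrC Re_realM [RHS]mulrC.
Qed.

Lemma nrm2D_le u v : nrm2 (u + v) <= 2 * (nrm2 u + nrm2 v).
Proof.
have par : nrm2 (u + v) + nrm2 (u - v) = 2 * nrm2 u + 2 * nrm2 v.
  rewrite /nrm2 !(formDl ipL ipJ) !(formDr ipL) !(formNl ipL ipJ) !(formNr ipL).
  by rewrite !raddfD !raddfN /=; ring.
by have := nrm2_ge0 (u - v); lra.
Qed.

Lemma nrm2B_le u v : nrm2 (u - v) <= 2 * (nrm2 u + nrm2 v).
Proof. by rewrite -(nrm2N v); exact: nrm2D_le. Qed.

Lemma ip_cauchy_schwarz u v : complex.Re (ip u v * (ip u v)^*) <= nrm2 u * nrm2 v.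
Proof. exact: (form_cauchy_schwarz ipL ipJ ip_ge0). Qed.

Definition linop (T : V -> V) := forall a u v, T (a *: u + v) = a *: T u + T v.
Definition psd (T : V -> V) := forall v, 0 <= ip v (T v).
Definition selfadjoint (T : V -> V) := forall u v, ip (T u) v = ip u (T v).

Section LinearOperator.
Variable T : V -> V.
Hypothesis hT : linop T.

Lemma linop0 : T 0 = 0.
Proof. by apply: (addrI (T 0)); rewrite -{1}[T 0]scale1r -hT scale1r !addr0. Qed.

Lemma linopD u v : T (u + v) = T u + T v.
Proof. by rewrite -{1}[u]scale1r hT scale1r. Qed.

Lemma linopZ a u : T (a *: u) = a *: T u.
Proof. by rewrite -[a *: u]addr0 hT linop0 addr0. Qed.

Lemma linopN u : T (- u) = - T u.
Proof. by rewrite -scaleN1r linopZ scaleN1r. Qed.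

Lemma linopB u v : T (u - v) = T u - T v.
Proof. by rewrite linopD linopN. Qed.

Lemma linop_sum I (r : seq I) (P : pred I) (F : I -> V) :
  T (\sum_(i <- r | P i) F i) = \sum_(i <- r | P i) T (F i).
Proof. by apply: (big_morph T); [exact: linopD | exact: linop0]. Qed.

End LinearOperator.

Lemma linopBB T S : linop T -> linop S -> linop (fun v => T v - S v).
Proof. by move=> hT hS a u v; rewrite hT hS scalerBr opprD addrACA. Qed.

(* Polarization: [d u v := <u, T v> - <T u, v>] is a sesquilinear form vanishing
   on the diagonal, and testing it at [u + v] and [u + i v] kills it. *)
Lemma psd_selfadjoint T : linop T -> psd T -> selfadjoint T.
Proof.
move=> hT hP u v.
pose d u v := ip u (T v) - ip (T u) v.
have dd w : d w w = 0 by rewrite /d (ipJ w (T w)) (ger0_realE (hP w)) conjcR subrr.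
have E s : d (u + s *: v) (u + s *: v) =
    d u u + s * d u v + s^* * d v u + s * s^* * d v v.
  rewrite /d (linopD hT) (linopZ hT) !(formDl ipL ipJ) !(formDr ipL).
  by rewrite !(formZl ipL ipJ) !(formZr ipL); ring.
have h1 := E 1; rewrite !dd conjC1 !mul1r ?mulr0 add0r addr0 in h1.
have h2 := E 'i; rewrite !dd ?mulr0 add0r addr0 in h2.
have iJ : 'i^* = - 'i :> C by apply/eqP; rewrite eq_complex /= oppr0 !eqxx.
rewrite iJ mulNr in h2.
have i_neq0 : 'i != 0 :> C by apply/eqP; case=> /eqP; rewrite oner_eq0.
have h3 : d u v - d v u = 0.
  have : 'i * (d u v - d v u) = 0 by rewrite mulrBr -h2.
  by move/eqP; rewrite mulf_eq0 (negbTE i_neq0) => /eqP.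
have duv0 : d u v = 0.
  have -> : d u v = ((d u v + d v u) + (d u v - d v u)) / 2 by field.
  by rewrite -h1 h3 addr0 mul0r.
by apply/eqP; rewrite eq_sym -subr_eq0 -/(d u v) duv0.
Qed.

Section PsdBound.
Variables (T : V -> V) (K : R).
Hypotheses (hT : linop T) (hP : psd T) (K0 : 0 <= K).
Hypothesis hK : forall v, complex.Re (ip v (T v)) <= K * nrm2 v.

(* Cauchy-Schwarz for the form [<u, T w>]. *)
Lemma psd_nrm2_le_ip v : nrm2 (T v) <= K * complex.Re (ip v (T v)).
Proof.
have hs := psd_selfadjoint hT hP.
pose g u w := ip u (T w).
have gL u a v' w : g u (a *: v' + w) = a * g u v' + g u w by rewrite /g hT ipL.
have gJ u w : g w u = (g u w)^* by rewrite /g [LHS]ipJ hs.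
have cs := form_cauchy_schwarz gL gJ hP v (T v).
rewrite /g -(hs v (T v)) ip_selfE conjcR -rmorphM /= in cs.
have q0 : 0 <= complex.Re (ip v (T v)) := ger0_Re (hP v).
set n := nrm2 (T v) in cs *; set q := complex.Re (ip v (T v)) in cs q0 *.
have h2 : n * n <= (K * q) * n.
  by apply: (le_trans cs); rewrite [K * q]mulrC -mulrA ler_wpM2l.
have [->|nn] := eqVneq n 0; first by rewrite mulr_ge0.
have np : 0 < n by rewrite lt_def nn nrm2_ge0.
by rewrite -(ler_pM2r np).
Qed.

Lemma psd_nrm2_le v : nrm2 (T v) <= K ^+ 2 * nrm2 v.
Proof. by apply: (le_trans (psd_nrm2_le_ip v)); rewrite expr2 -mulrA ler_wpM2l. Qed.

End PsdBound.

Lemma bounded_op_nrm2 T : bounded_op ip T ->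
  exists2 M, 0 <= M & forall v, nrm2 (T v) <= M * nrm2 v.
Proof.
case=> _ [M hM]; exists (`|M| ^+ 2) => [|v]; first exact: exprn_ge0.
have := hM v; rewrite /hnorm -/(nrm2 _) -/(nrm2 v) => h.
have h1 : Num.sqrt (nrm2 (T v)) <= `|M| * Num.sqrt (nrm2 v).
  exact: (le_trans h (ler_wpM2r (sqrtr_ge0 _) (ler_norm M))).
rewrite -(sqr_sqrtr (nrm2_ge0 (T v))) -(sqr_sqrtr (nrm2_ge0 v)) -exprMn.
by rewrite lerXn2r ?nnegrE ?sqrtr_ge0 ?mulr_ge0.
Qed.

Lemma nrm2_bounded_op T K : linop T -> 0 <= K ->
  (forall v, nrm2 (T v) <= K * nrm2 v) -> bounded_op ip T.
Proof.
move=> hT K0 hK; split; first exact: hT.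
exists (Num.sqrt K) => v; rewrite /hnorm -/(nrm2 _) -/(nrm2 v) -sqrtrM //.
exact: ler_wsqrtr.
Qed.

(* [Re <v, T v>^2 <= ||v||^2 ||T v||^2 <= M ||v||^4]. *)
Lemma positive_op_bound T : positive_op ip T ->
  exists2 K, 0 < K & forall v, complex.Re (ip v (T v)) <= K * nrm2 v.
Proof.
case=> hb hp; have [M M0 hM] := bounded_op_nrm2 hb.
exists (M + 1) => [|v]; first by rewrite ltr_wpDl.
have := ip_cauchy_schwarz v (T v); have := sqrRe_le_Re_mulcJ (ip v (T v)).
have := hM v; have := nrm2_ge0 v; have := nrm2_ge0 (T v); have := ger0_Re (hp v).
set q := complex.Re _; set n := nrm2 v; set a := nrm2 (T v); set z := complex.Re (_ * _).
move=> q0 a0 n0 haM hqz hz.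
have h1 : n * a <= n * (M * n) by rewrite ler_wpM2l.
have h : q ^+ 2 <= M * n ^+ 2 by rewrite expr2; nra.
by rewrite expr2 in hqz h; nra.
Qed.

Definition hcvg (s : nat -> V) (l : V) := forall e : R, 0 < e ->
  exists N, forall k, (N <= k)%N -> nrm2 (s k - l) < e.

Lemma hnorm_lt v e : 0 < e -> (hnorm ip v < e) = (nrm2 v < e ^+ 2).
Proof.
move=> e0; rewrite /hnorm -/(nrm2 v) -(ltr_sqrt _ (exprn_gt0 2 e0)) sqrtr_sqr.
by rewrite gtr0_norm.
Qed.

Lemma strong_limitP T L :
  strong_limit ip T L <-> forall v, hcvg (fun k => T k v) (L v).
Proof.
split=> h v e e0.
- have se : 0 < Num.sqrt e by rewrite sqrtr_gt0.
  have [N hN] := h v _ se; exists N => k hk.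
  by have := hN k hk; rewrite hnorm_lt // sqr_sqrtr // ltW.
- have [N hN] := h v (e ^+ 2) (exprn_gt0 2 e0); exists N => k hk.
  by rewrite hnorm_lt //; exact: hN.
Qed.

Lemma hcomplete_cauchy s : hcomplete ip ->
  (forall e, 0 < e -> exists N, forall k j, (N <= k)%N -> (N <= j)%N ->
     nrm2 (s k - s j) < e) ->
  exists l, hcvg s l.
Proof.
move=> hc h.
have [l hl] : exists l, forall e : R, 0 < e -> exists N : nat, forall n : nat,
    (N <= n)%N -> hnorm ip (s n - l) < e.
  apply: hc => e e0.
  have [N hN] := h (e ^+ 2) (exprn_gt0 2 e0); exists N => k j hk hj.
  by rewrite hnorm_lt //; exact: hN.
exists l => e e0.
have se : 0 < Num.sqrt e by rewrite sqrtr_gt0.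
have [N hN] := hl _ se; exists N => k hk.
by have := hN k hk; rewrite hnorm_lt // sqr_sqrtr // ltW.
Qed.

Lemma hcvg_eq s t l l' : hcvg s l -> (forall k, s k = t k) -> l = l' -> hcvg t l'.
Proof. by move=> hs h <- e e0; have [N hN] := hs e e0; exists N => k hk; rewrite -h; exact: hN. Qed.

Lemma hcvg_shift s l : hcvg s l -> hcvg (fun k => s k.+1) l.
Proof. by move=> hs e e0; have [N hN] := hs e e0; exists N => k hk; apply: hN; exact: leqW. Qed.

Lemma hcvg_cst l : hcvg (fun _ => l) l.
Proof. by move=> e e0; exists 0%N => k _; rewrite subrr /nrm2 (form0r ipL). Qed.

Lemma hcvg_unique s l l' : hcvg s l -> hcvg s l' -> l = l'.
Proof.
move=> h1 h2; apply/eqP; rewrite -subr_eq0; apply/eqP; apply: nrm2_eq0.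
apply/eqP; rewrite eq_le nrm2_ge0 andbT leNgt; apply/negP => hp.
have e0 : 0 < nrm2 (l - l') / 4 by rewrite divr_gt0.
have [N1 hN1] := h1 _ e0; have [N2 hN2] := h2 _ e0.
have a1 := hN1 (maxn N1 N2) (leq_maxl _ _).
have a2 := hN2 (maxn N1 N2) (leq_maxr _ _).
have := nrm2D_le (l - s (maxn N1 N2)) (s (maxn N1 N2) - l').
by rewrite addrA subrK (nrm2_subC l (s (maxn N1 N2))); lra.
Qed.

Lemma hcvg_lin a s1 s2 l1 l2 : hcvg s1 l1 -> hcvg s2 l2 ->
  hcvg (fun k => a *: s1 k + s2 k) (a *: l1 + l2).
Proof.
move=> h1 h2 e e0.
set c := complex.Re (a * a^*); have c0 : 0 <= c := Re_mulcJ_ge0 a.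
have e1 : 0 < e / (4 * (c + 1)) by rewrite divr_gt0 // mulr_gt0 // ltr_wpDl.
have e2 : 0 < e / 4 by rewrite divr_gt0.
have [N1 hN1] := h1 _ e1; have [N2 hN2] := h2 _ e2.
exists (maxn N1 N2) => k hk.
have a1 := hN1 k (leq_trans (leq_maxl _ _) hk).
have a2 := hN2 k (leq_trans (leq_maxr _ _) hk).
have -> : a *: s1 k + s2 k - (a *: l1 + l2) = a *: (s1 k - l1) + (s2 k - l2).
  by rewrite opprD addrACA -scalerBr.
apply: (le_lt_trans (nrm2D_le _ _)); rewrite nrm2Z -/c.
have : c * nrm2 (s1 k - l1) <= e / 4.
  apply: (le_trans (ler_wpM2l c0 (ltW a1))).
  have -> : e / 4 = (c + 1) * (e / (4 * (c + 1))) by field; lra.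
  by rewrite ler_wpM2r ?lerDl // ltW.
lra.
Qed.

Lemma hcvg_ip s l u : hcvg s l -> forall e, 0 < e -> exists N, forall k, (N <= k)%N ->
  complex.Re ((ip u (s k) - ip u l) * (ip u (s k) - ip u l)^*) < e.
Proof.
move=> h e e0.
have e1 : 0 < e / (nrm2 u + 1) by rewrite divr_gt0 // ltr_wpDl ?nrm2_ge0.
have [N hN] := h _ e1; exists N => k hk.
rewrite -(formBr ipL); apply: (le_lt_trans (ip_cauchy_schwarz _ _)).
apply: (le_lt_trans (ler_wpM2l (nrm2_ge0 u) (ltW (hN k hk)))).
have n0 := nrm2_ge0 u.
have E : (nrm2 u + 1) * (e / (nrm2 u + 1)) = e by field; lra.
by rewrite -[X in _ < X]E ltr_pM2r // ltrDl.
Qed.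

Lemma cvg_Re_ip s l u : hcvg s l ->
  (fun k => complex.Re (ip u (s k))) @ \oo --> complex.Re (ip u l).
Proof.
move=> h; apply/cvgrPdist_lt => e e0.
have [N hN] := hcvg_ip u h (exprn_gt0 2 e0); exists N => // k /hN hk.
have := sqrRe_le_Re_mulcJ (ip u (s k) - ip u l); rewrite raddfB /= => h'.
by rewrite ltr_norml; apply/andP; split; nra.
Qed.

Section DecreasingPsd.
Variables (T : nat -> V -> V) (K : R).
Hypothesis hc : hcomplete ip.
Hypotheses (hT : forall k, linop (T k)) (hP : forall k, psd (T k)).
Hypothesis hdecr : forall k v, 0 <= ip v (T k v - T k.+1 v).
Hypotheses (K0 : 0 <= K) (hK : forall v, complex.Re (ip v (T 0 v)) <= K * nrm2 v).

Lemma decr_psd_sub k j v : (k <= j)%N -> 0 <= ip v (T k v - T j v).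
Proof.
move/subnKC <-; elim: (j - k)%N => [|d IH]; first by rewrite addn0 subrr (form0r ipL).
rewrite addnS -(subrK (T (k + d)%N v) (T k v)) -addrA (formDr ipL).
exact: addr_ge0.
Qed.

Lemma decr_bound k v : complex.Re (ip v (T k v)) <= K * nrm2 v.
Proof.
apply: le_trans (hK v).
by have := ger0_Re (decr_psd_sub v (leq0n k)); rewrite (formBr ipL) raddfB subr_ge0.
Qed.

Lemma decr_nrm2_sub k j v : (k <= j)%N ->
  nrm2 (T k v - T j v) <= K * (complex.Re (ip v (T k v)) - complex.Re (ip v (T j v))).
Proof.
move=> kj.
have bd w : complex.Re (ip w (T k w - T j w)) <= K * nrm2 w.
  apply: le_trans (decr_bound k w).
  by rewrite (formBr ipL) raddfB lerBlDr lerDl; apply: ger0_Re; exact: hP.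
have := psd_nrm2_le_ip (linopBB (hT k) (hT j)) (fun w => decr_psd_sub w kj) K0 bd v.
by rewrite (formBr ipL) raddfB.
Qed.

Lemma decr_cauchy v : exists l, hcvg (fun k => T k v) l.
Proof.
apply: hcomplete_cauchy => // e e0.
have e1 : 0 < e / (K + 1) by rewrite divr_gt0 // ltr_wpDl.
have d1 k : complex.Re (ip v (T k.+1 v)) <= complex.Re (ip v (T k v)).
  by have := ger0_Re (hdecr k v); rewrite (formBr ipL) raddfB subr_ge0.
have [N hN] := nonincreasing_cauchy d1 (fun k => ger0_Re (hP k v)) e1.
exists N => k j hk hj.
wlog kj : k j hk hj / (k <= j)%N.
  move=> W; have [kj|/ltnW jk] := leqP k j; first exact: W.
  by rewrite nrm2_subC; exact: W.
apply: (le_lt_trans (decr_nrm2_sub v kj)).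
have := hN k j hk hj; set a := _ - _ => a0.
apply: (le_lt_trans (ler_wpM2l K0 (ler_norm a))).
apply: (le_lt_trans (ler_wpM2l K0 (ltW a0))).
have E : (K + 1) * (e / (K + 1)) = e by field; rewrite gt_eqF // ltr_wpDl.
by rewrite -[X in _ < X]E ltr_pM2r // ltrDl.
Qed.

Lemma decr_psd_strong_cvg : exists L, [/\ linop L, psd L,
  forall v, hcvg (fun k => T k v) (L v) & forall k v, 0 <= ip v (T k v - L v)].
Proof.
have [L hL] := choice decr_cauchy.
exists L; split.
- move=> a u w; apply: (hcvg_unique (hL (a *: u + w))).
  by apply: hcvg_eq (hcvg_lin a (hL u) (hL w)) _ _ => // k; rewrite (hT k).
- move=> v; apply: ger0_approx => e e0.
  have [N hN] := hcvg_ip v (hL v) e0.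
  by exists (ip v (T N v)); [exact: hP | exact: hN].
- exact: hL.
- move=> k v; apply: ger0_approx => e e0.
  have [N hN] := hcvg_ip v (hL v) e0.
  exists (ip v (T k v - T (maxn k N) v)); first exact: decr_psd_sub (leq_maxl _ _).
  rewrite !(formBr ipL) (_ : _ - _ - _ = - (ip v (T (maxn k N) v) - ip v (L v))); last by ring.
  by rewrite Re_mulcJN; apply: hN; exact: leq_maxr.
Qed.

End DecreasingPsd.

Section PolyOperator.
Variable B : V -> V.
Hypothesis hB : linop B.

Definition poly_op (p : {poly R}) (v : V) : V :=
  \sum_(i < size p) (p`_i)%:C *: iter i B v.

Lemma iter_linop i : linop (iter i B).
Proof. by elim: i => [|i IH] a u v //=; rewrite IH hB. Qed.

Lemma poly_opE (p : {poly R}) N v : (size p <= N)%N ->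
  poly_op p v = \sum_(i < N) (p`_i)%:C *: iter i B v.
Proof.
move=> hN; rewrite /poly_op (big_ord_widen N (fun i => (p`_i)%:C *: iter i B v) hN).
rewrite big_mkcond; apply: eq_bigr => i _; case: ifP => // /negbT.
by rewrite -leqNgt => h; rewrite nth_default // scale0r.
Qed.

Lemma poly_op_linop p : linop (poly_op p).
Proof.
move=> a u v; rewrite /poly_op scaler_sumr -big_split; apply: eq_bigr => i _ /=.
by rewrite (iter_linop i) scalerDr !scalerA mulrC.
Qed.

Lemma poly_op0 v : poly_op 0 v = 0.
Proof. by rewrite /poly_op size_poly0 big_ord0. Qed.

Lemma poly_opD p q v : poly_op (p + q) v = poly_op p v + poly_op q v.
Proof.
set N := maxn (size p) (size q).
rewrite (@poly_opE (p + q) N) ?size_polyD // (@poly_opE p N) ?leq_maxl //.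
rewrite (@poly_opE q N) ?leq_maxr // -big_split; apply: eq_bigr => i _ /=.
by rewrite coefD rmorphD scalerDl.
Qed.

Lemma poly_opZ c p v : poly_op (c *: p) v = c%:C *: poly_op p v.
Proof.
rewrite (@poly_opE (c *: p) (size p)) ?size_scale_leq // /poly_op scaler_sumr.
by apply: eq_bigr => i _; rewrite coefZ rmorphM scalerA.
Qed.

Lemma poly_opB p q v : poly_op (p - q) v = poly_op p v - poly_op q v.
Proof.
by rewrite -[- q]scaleN1r poly_opD poly_opZ rmorphN1 scaleN1r.
Qed.

Lemma poly_opC c v : poly_op c%:P v = c%:C *: v.
Proof. by rewrite (@poly_opE _ 1) ?size_polyC_leq1 // big_ord1 coefC. Qed.

Lemma poly_opX v : poly_op 'X v = B v.
Proof.
rewrite (@poly_opE _ 2) ?size_polyX // big_ord_recr big_ord1 /= !coefX /=.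
by rewrite scale0r add0r scale1r.
Qed.

Lemma poly_opMX p v : poly_op (p * 'X) v = poly_op p (B v).
Proof.
rewrite (@poly_opE _ (size p).+1); last first.
  by apply: (leq_trans (size_polyMleq _ _)); rewrite size_polyX addn2.
rewrite big_ord_recl coefMX /= scale0r add0r /poly_op.
by apply: eq_bigr => i _; rewrite coefMX /= -iterS iterSr.
Qed.

Lemma poly_op_comm p v : poly_op p (B v) = B (poly_op p v).
Proof.
rewrite /poly_op (linop_sum hB); apply: eq_bigr => i _.
by rewrite (linopZ hB) -iterSr iterS.
Qed.

Lemma poly_opM p q v : poly_op (p * q) v = poly_op p (poly_op q v).
Proof.
elim/poly_ind: p v => [|p c IH] v; first by rewrite mul0r !poly_op0.
rewrite mulrDl mulrAC poly_opD poly_opMX IH mul_polyC poly_opZ.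
by rewrite poly_opD poly_opMX poly_opC poly_op_comm.
Qed.

Hypothesis hBpsd : psd B.

Lemma iter_selfadjoint i : selfadjoint (iter i B).
Proof.
elim: i => [|i IH] u w //=.
by rewrite (psd_selfadjoint hB hBpsd) IH -iterSr iterS.
Qed.

(* [B^(2i+1) = B^i B B^i] and [B^(2i) = B^i B^i]. *)
Lemma iter_psd i : psd (iter i B).
Proof.
move=> v; rewrite -(odd_double_half i) -addnn.
case: (odd i) => /=; rewrite add0n iterD.
- by rewrite -iterS iterSr -iter_selfadjoint; exact: hBpsd.
- by rewrite -iter_selfadjoint.
Qed.

Lemma poly_op_psd p : coef_ge0 p -> psd (poly_op p).
Proof.
move=> hp v; rewrite /poly_op (form_sumr ipL); apply: sumr_ge0 => i _.
by rewrite (formZr ipL) mulr_ge0 ?ler0c // iter_psd.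
Qed.

End PolyOperator.

Section PositiveSqrt.
Hypothesis hc : hcomplete ip.
Variables (A : V -> V) (K : R).
Hypotheses (hA : linop A) (hApsd : psd A) (K0 : 0 < K).
Hypothesis hK : forall v, complex.Re (ip v (A v)) <= K * nrm2 v.

(* With [A' := A / K] and [B := I - A'] we have [0 <= B <= I], and the
   Picard iterates [Y_k := p_k(B)] of [Y = (B + Y^2) / 2] increase to
   [I - A'^(1/2)]. *)
Let A' v := (K^-1)%:C *: A v.
Let B v := v - A' v.
Let Y k := poly_op B (sqrt_iter R k).

Let B_linop : linop B.
Proof.
move=> a u w; rewrite /B /A' hA scalerDr !scalerA mulrC -scalerA.
by rewrite opprD addrACA -scalerBr.
Qed.

Let ip_B v : ip v (B v) = (nrm2 v - K^-1 * complex.Re (ip v (A v)))%:C.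
Proof.
by rewrite /B /A' (formBr ipL) (formZr ipL) ip_selfE {1}(ger0_realE (hApsd v)) -rmorphM -rmorphB.
Qed.

Let B_psd : psd B.
Proof. by move=> v; rewrite ip_B ler0c subr_ge0 ler_pdivrMl. Qed.

Let Y_linop k : linop (Y k). Proof. exact: poly_op_linop. Qed.
Let Y_psd k : psd (Y k). Proof. exact: (poly_op_psd B_linop B_psd (sqrt_iter_ge0 R k)). Qed.

Let Y_rec k v : Y k.+1 v = (2^-1)%:C *: (B v + Y k (Y k v)).
Proof. by rewrite /Y /= poly_opZ poly_opD poly_opX poly_opM. Qed.

Let Y_le1 k v : complex.Re (ip v (Y k v)) <= nrm2 v.
Proof.
elim: k v => [|k IH] v; first by rewrite /Y poly_op0 (form0r ipL) nrm2_ge0.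
rewrite Y_rec (formZr ipL) Re_realM (formDr ipL) raddfD /=.
have hB : complex.Re (ip v (B v)) <= nrm2 v.
  rewrite ip_B lerBlDr lerDl; apply: mulr_ge0; first by rewrite invr_ge0 ltW.
  exact: ger0_Re.
have hYY : complex.Re (ip v (Y k (Y k v))) <= nrm2 v.
  rewrite -(psd_selfadjoint (Y_linop k) (Y_psd k)) ip_selfE /=.
  apply: le_trans (IH v); rewrite -[X in _ <= X]mul1r.
  by apply: psd_nrm2_le_ip => // w; rewrite mul1r.
lra.
Qed.

Let Y_contraction k w : nrm2 (Y k w) <= nrm2 w.
Proof.
have hY1 u : complex.Re (ip u (Y k u)) <= 1 * nrm2 u by rewrite mul1r.
by have := psd_nrm2_le (Y_linop k) (Y_psd k) ler01 hY1 w; rewrite expr1n mul1r.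
Qed.

Let I_sub_Y_cvg : exists L, [/\ linop L, psd L,
  forall v, complex.Re (ip v (L v)) <= nrm2 v & forall v, hcvg (fun k => v - Y k v) (L v)].
Proof.
pose T k v := v - Y k v.
have T_linop k : linop (T k) by apply: linopBB => //.
have T_psd k : psd (T k).
  move=> v; rewrite /T (formBr ipL) ip_selfE (ger0_realE (Y_psd k v)) -rmorphB ler0c.
  by rewrite subr_ge0 Y_le1.
have T_decr k v : 0 <= ip v (T k v - T k.+1 v).
  rewrite /T opprB addrC addrA subrK /Y -poly_opB.
  exact: (poly_op_psd B_linop B_psd (sqrt_iterS_sub_ge0 R k)).
have T0 v : complex.Re (ip v (T 0%N v)) <= 1 * nrm2 v by rewrite /T /Y poly_op0 subr0 mul1r.
have [L [L_linop L_psd L_cvg L_le]] := decr_psd_strong_cvg hc T_linop T_psd T_decr ler01 T0.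
exists L; split => // v.
have := ger0_Re (L_le 0%N v).
by rewrite /T /Y poly_op0 subr0 (formBr ipL) raddfB subr_ge0.
Qed.

Lemma sqrt_iter_limit : exists L, [/\ linop L, psd L,
  forall v, complex.Re (ip v (L v)) <= nrm2 v & forall v, L (L v) = A' v].
Proof.
have [L [L_linop L_psd L_le1 L_cvg]] := I_sub_Y_cvg.
exists L; split => //.
pose Y' v := v - L v.
have Y_cvg v : hcvg (fun k => Y k v) (Y' v).
  apply: hcvg_eq (hcvg_lin (-1) (L_cvg v) (hcvg_cst v)) _ _ => [k|].
    by rewrite scaleN1r opprB subrK.
  by rewrite /Y' scaleN1r addrC.
have YY_cvg v : hcvg (fun k => Y k (Y k v)) (Y' (Y' v)).
  move=> e e0; have e4 : 0 < e / 4 by rewrite divr_gt0.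
  have [N1 h1] := Y_cvg v _ e4; have [N2 h2] := Y_cvg (Y' v) _ e4.
  exists (maxn N1 N2) => k hk.
  have a1 := h1 k (leq_trans (leq_maxl _ _) hk).
  have a2 := h2 k (leq_trans (leq_maxr _ _) hk).
  rewrite -(subrK (Y k (Y' v)) (Y k (Y k v))) -addrA -(linopB (Y_linop k)).
  apply: (le_lt_trans (nrm2D_le _ _)).
  by have := Y_contraction k (Y k v - Y' v); lra.
have Y'_fix v : Y' (Y' v) = Y' v + Y' v - B v.
  have : Y' v = (2^-1)%:C *: (B v + Y' (Y' v)).
    apply: (hcvg_unique (hcvg_shift (Y_cvg v))).
    apply: hcvg_eq (hcvg_lin (2^-1)%:C (YY_cvg v) (hcvg_cst ((2^-1)%:C *: B v))) _ _.
      by move=> k; rewrite Y_rec [RHS]scalerDr addrC.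
    by rewrite [RHS]scalerDr addrC.
  move/(congr1 (fun z => 2%:R%:C *: z)).
  rewrite scalerA -rmorphM mulfV ?pnatr_eq0 // scale1r -[2%:R]/(1 + 1).
  rewrite rmorphD scalerDl scale1r => ->.
  by rewrite addrAC subrr add0r.
have Y'_linop : linop Y' by apply: linopBB.
move=> v.
have L_Y' w : L w = w - Y' w by rewrite /Y' opprB addrC subrK.
rewrite [L (L v)]L_Y' [L v]L_Y' (linopB Y'_linop) Y'_fix /B.
move: (Y' v) (A' v) => w a.
rewrite [- (w - _)]opprB [- (v - a)]opprB [w + w + _ - w]addrAC addrK.
by rewrite addrA subrK addrC subrK.
Qed.

Lemma pos_sqrt_exists : exists S, is_pos_sqrt ip A S.
Proof.
have [L [L_linop L_psd L_le1 LL]] := sqrt_iter_limit.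
pose S v := (Num.sqrt K)%:C *: L v.
have S_linop : linop S by move=> a u w; rewrite /S L_linop scalerDr !scalerA mulrC.
exists S; split; last first.
  move=> v; rewrite /S (linopZ L_linop) LL /A' !scalerA -!rmorphM.
  by rewrite -expr2 (sqr_sqrtr (ltW K0)) mulfV ?gt_eqF // scale1r.
split; last by move=> v; rewrite /S (formZr ipL) mulr_ge0 // ler0c sqrtr_ge0.
apply: (nrm2_bounded_op S_linop (ltW K0)) => v.
rewrite /S nrm2Z conjcR -rmorphM /= -expr2 (sqr_sqrtr (ltW K0)) ler_wpM2l ?(ltW K0) //.
have hL1 w : complex.Re (ip w (L w)) <= 1 * nrm2 w by rewrite mul1r.
by have := psd_nrm2_le L_linop L_psd ler01 hL1 v; rewrite expr1n mul1r.
Qed.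

End PositiveSqrt.

Lemma opsqrt_spec A : hcomplete ip -> positive_op ip A -> is_pos_sqrt ip A (opsqrt ip A).
Proof.
move=> hc hA; rewrite /opsqrt; case: pselect => [h|h]; first exact: (proj2_sig (cid h)).
have [K K0 hK] := positive_op_bound hA.
by case: h; exact: (pos_sqrt_exists hc (proj1 (proj1 hA)) (proj2 hA) K0 hK).
Qed.

Section EnergyTree.
Hypothesis hc : hcomplete ip.
Variables (m : nat) (P : 'I_m -> V -> V) (R0 : V -> V).
Hypotheses (hP : forall j, orth_proj ip (P j)) (hR0 : positive_op ip R0).

Let P_linop j : linop (P j). Proof. by case: (hP j) => [[]]. Qed.
Let P_idem j v : P j (P j v) = P j v. Proof. by case: (hP j). Qed.
Let P_selfadjoint j : selfadjoint (P j). Proof. by case: (hP j). Qed.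

Local Notation Rw := (Rw ip P R0).
Local Notation Dw := (Dw ip P R0).

Lemma Rw_rcons w j :
  Rw (rcons w j) = (fun v => opsqrt ip (Rw w) (opsqrt ip (Rw w) v - P j (opsqrt ip (Rw w) v))).
Proof. by rewrite /Rw rev_rcons. Qed.

Lemma Dw_rcons w j :
  Dw (rcons w j) = (fun v => opsqrt ip (Rw w) (P j (opsqrt ip (Rw w) v))).
Proof. by rewrite /Dw rev_rcons. Qed.

(* [<v, S (I - P) S v> = ||(I - P) S v||^2] with [S = R_w^(1/2)]. *)
Lemma Rw_positive w : positive_op ip (Rw w).
Proof.
elim/last_ind: w => [|w j IH]; first exact: hR0.
have [[S_bounded S_psd] SS] := opsqrt_spec hc IH.
rewrite Rw_rcons; set S := opsqrt ip _ in S_bounded S_psd SS *.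
have S_linop : linop S := proj1 S_bounded.
have [Ms Ms0 hMs] := bounded_op_nrm2 S_bounded.
have [Mp Mp0 hMp] := bounded_op_nrm2 (let: And3 b _ _ := hP j in b).
split.
  apply: (nrm2_bounded_op (K := Ms * (2 * (Ms + Mp * Ms)))).
  - by move=> a u v; rewrite S_linop P_linop opprD addrACA -scalerBr S_linop.
  - by rewrite !mulr_ge0 // addr_ge0 // mulr_ge0.
  move=> v; apply: (le_trans (hMs _)); rewrite -mulrA ler_wpM2l //.
  apply: (le_trans (nrm2B_le _ _)); rewrite -mulrA ler_wpM2l // mulrDl.
  rewrite lerD ?hMs // -mulrA; apply: (le_trans (hMp _)); rewrite ler_wpM2l //.
move=> v; rewrite -(psd_selfadjoint S_linop S_psd); set u := S v.
rewrite -{1}(subrK (P j u) u) (formDl ipL ipJ) P_selfadjoint (linopB (P_linop j)) P_idem.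
by rewrite subrr (form0r ipL) addr0.
Qed.

Lemma Rw_linop w : linop (Rw w). Proof. exact: (proj1 (proj1 (Rw_positive w))). Qed.
Lemma Rw_psd w : psd (Rw w). Proof. exact: (proj2 (Rw_positive w)). Qed.

(* [S (I - P_j) S + S P_j S = S S] with [S = R_w^(1/2)]. *)
Lemma Rw_split w j v : Rw w v = Rw (rcons w j) v + Dw (rcons w j) v.
Proof.
have [[[S_linop _] _] SS] := opsqrt_spec hc (Rw_positive w).
by rewrite Rw_rcons Dw_rcons /= (linopB S_linop) subrK SS.
Qed.

Lemma Dw_psd w j : psd (Dw (rcons w j)).
Proof.
have [[[S_linop _] S_psd] _] := opsqrt_spec hc (Rw_positive w).
move=> v; rewrite Dw_rcons -(psd_selfadjoint S_linop S_psd) -P_idem -P_selfadjoint.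
exact: ip_ge0.
Qed.

Lemma Rw_le_R0 w v : complex.Re (ip v (Rw w v)) <= complex.Re (ip v (R0 v)).
Proof.
elim/last_ind: w => [//|w j IH]; apply: le_trans IH.
by rewrite (Rw_split w j v) (formDr ipL) raddfD lerDl ger0_Re // Dw_psd.
Qed.

Lemma Rw_prefixS (om : nat -> 'I_m) k v :
  Rw (prefix om k) v = Rw (prefix om k.+1) v + Delta ip P R0 k.+1 om v.
Proof. by rewrite /Delta /prefix mkseqS; exact: Rw_split. Qed.

Lemma Delta_psd (om : nat -> 'I_m) k : psd (Delta ip P R0 k.+1 om).
Proof. by rewrite /Delta /prefix mkseqS; exact: Dw_psd. Qed.

Lemma Rinf_strong_limit (om : nat -> 'I_m) :
  strong_limit ip (fun k => Rw (prefix om k)) (Rinf ip P R0 om).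
Proof.
rewrite /Rinf /slim; case: pselect => [h|h]; first exact: (proj2_sig (cid h)).
case: h; have [K K0 hK] := positive_op_bound hR0.
have decr k v : 0 <= ip v (Rw (prefix om k) v - Rw (prefix om k.+1) v).
  by rewrite Rw_prefixS addrAC subrr add0r; exact: Delta_psd.
have [L [_ _ L_cvg _]] := decr_psd_strong_cvg hc (fun k => Rw_linop _) (fun k => Rw_psd _)
  decr (ltW K0) hK.
by exists L; apply/strong_limitP.
Qed.

Lemma Re_ip_Rw_prefixS (om : nat -> 'I_m) k v :
  complex.Re (ip v (Rw (prefix om k) v)) =
  complex.Re (ip v (Rw (prefix om k.+1) v)) + complex.Re (ip v (Delta ip P R0 k.+1 om v)).
Proof. by rewrite Rw_prefixS (formDr ipL) raddfD. Qed.

Lemma Re_ip_Rw_bound w v : 0 <= complex.Re (ip v (Rw w v)) <= complex.Re (ip v (R0 v)).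
Proof. by rewrite Rw_le_R0 andbT; apply: ger0_Re; exact: Rw_psd. Qed.

Lemma Re_ip_Rinf_cvg (om : nat -> 'I_m) v :
  (fun k => complex.Re (ip v (Rw (prefix om k) v))) @ \oo -->
  complex.Re (ip v (Rinf ip P R0 om v)).
Proof. exact: cvg_Re_ip (proj1 (strong_limitP _ _) (Rinf_strong_limit om) v). Qed.

End EnergyTree.

End HilbertSpace.

Lemma eseries_telescope (R : realType) (u : nat -> R) l : u @ \oo --> l ->
  (\sum_(1 <= k <oo) (u k.-1 - u k)%:E = (u 0%N - l)%:E)%E.
Proof.
move=> ul; apply: cvg_lim => //; rewrite -cvg_shiftS /=.
have -> : (fun N => \sum_(1 <= k < N.+1) (u k.-1 - u k)%:E)%E = (fun N => (u 0%N - u N)%:E).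
  apply: funext; elim=> [|N IH]; first by rewrite big_geq // subrr.
  by rewrite big_nat_recr //= IH -EFinD addrA subrK.
by apply: cvg_EFin; [exact: nearW | exact: cvgB (cvg_cst _) ul].
Qed.

Section BoundedConvergence.
Variables (d : measure_display) (T : measurableType d) (R : realType).
Variable mu : {finite_measure set T -> \bar R}.
Variable c : R.

Lemma bounded_integrable (h : T -> R) : measurable_fun setT h ->
  (forall t, 0 <= h t <= c) -> mu.-integrable setT (EFin \o h).
Proof.
move=> mh hb.
apply: (le_integrable measurableT _ _ (finite_measure_integrable_cst mu c measurableT)).
  exact/measurable_realfun.measurable_EFinP.
by move=> t _ /=; have /andP[h0 hc] := hb t; rewrite lee_fin !ger0_norm // (le_trans h0).
Qed.

Variables (f : nat -> T -> R) (g : T -> R).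
Hypothesis f_measurable : forall k, measurable_fun setT (f k).
Hypothesis f_bound : forall k t, 0 <= f k t <= c.
Hypothesis f_cvg : forall t, f ^~ t @ \oo --> g t.

Lemma limit_bound t : 0 <= g t <= c.
Proof.
rewrite -(cvg_lim (@Rhausdorff R) (@f_cvg t)); apply/andP; split.
- by apply: limr_ge; [exact: cvgP (@f_cvg t) | near=> k; have /andP[] := f_bound k t].
- by apply: limr_le; [exact: cvgP (@f_cvg t) | near=> k; have /andP[] := f_bound k t].
Unshelve. all: by end_near.
Qed.

Lemma limit_integrable : mu.-integrable setT (EFin \o g).
Proof.
apply: bounded_integrable limit_bound.
exact: measurable_realfun.measurable_fun_cvg f_measurable (fun t _ => @f_cvg t).
Qed.

Lemma integral_telescope :
  (\sum_(1 <= k <oo) \int[mu]_t (f k.-1 t - f k t)%:E =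
    \int[mu]_t (f 0%N t)%:E - \int[mu]_t (g t)%:E)%E.
Proof.
have f_int k : mu.-integrable setT (EFin \o f k) by exact: bounded_integrable.
pose J k := fine (\int[mu]_t (f k t)%:E).
have JE k : (\int[mu]_t (f k t)%:E)%E = (J k)%:E.
  by rewrite /J fineK // (integrable_fin_num measurableT (f_int k)).
have g_fin := integrable_fin_num measurableT limit_integrable.
rewrite JE -(fineK g_fin) -EFinB -(eseries_telescope (u := J)); last first.
  have : (\int[mu]_t (f k t)%:E)%E @[k --> \oo] --> (\int[mu]_t (g t)%:E)%E.
    apply: (@dominated_cvg _ _ _ mu setT measurableT (fun k t => (f k t)%:E) _ (EFin \o cst c)).
    - by move=> k; exact/measurable_realfun.measurable_EFinP.
    - by move=> t _; apply: cvg_EFin; [exact: nearW | exact: f_cvg].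
    - by [].
    - exact: finite_measure_integrable_cst.
    by move=> k t _ /=; have /andP[f0 fc] := f_bound k t; rewrite lee_fin ger0_norm.
  by rewrite -(fineK g_fin); under eq_fun do rewrite JE; move/fine_cvgP => [].
apply: congr_lim; apply: funext => N; apply: eq_bigr => k _.
by rewrite integralB_EFin // !JE.
Qed.

End BoundedConvergence.

Lemma prefix_measurable (R : realType) n k (H : seq 'I_n.+2 -> R) :
  measurable_fun setT (fun om : Omega n => H (prefix om k)).
Proof.
move=> _ B mB; rewrite setTI.
have -> : (fun om : Omega n => H (prefix om k)) @^-1` B =
    \bigcup_(w : seq 'I_n.+2) (if pselect (size w = k /\ B (H w)) then cylinder w else set0).
  apply/seteqP; split => om /=.
  - move=> hB; exists (prefix om k) => //.
    case: pselect => [hh|hh]; first by rewrite /cylinder /= size_mkseq.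
    by case: hh; rewrite size_mkseq.
  - case=> w _; case: pselect => [[hs hb]|_] // hw.
    by rewrite /cylinder /= hs in hw; rewrite hw.
apply: countable_bigcupT_measurable; first exact: countableP.
move=> w; case: pselect => hh; last exact: measurable0.
by apply: sub_sigma_algebra; exists w.
Qed.

Local Close Scope complex_scope.

Theorem proposition4p4
  (R : realType) (V : lmodType R[i]) (ip : V -> V -> R[i])
  (hH : is_hilbert ip)
  (n : nat) (P : 'I_n.+2 -> V -> V) (hP : forall j, orth_proj ip (P j))
  (R0 : V -> V) (hR0 : positive_op ip R0)
  (q : 'I_n.+2 -> R) (hq0 : forall j, 0 <= q j) (hq1 : \sum_(j < n.+2) q j = 1)
  (x : V) (hx : 0 < ip x (R0 x))
  (nu : probability (Omega n) R)
  (hnu : forall w : seq 'I_n.+2,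
      nu (cylinder w) = (cylprob ip P R0 x q w)%:E) :
  let A := fun (k : nat) (om : Omega n) =>
             complex.Re (ip x (Delta ip P R0 k om x)) in
  let Einf := (\int[nu]_om (complex.Re (ip x (Rinf ip P R0 om x)))%:E)%E in
  (forall k : nat, (1 <= k)%N ->
     (forall om, 0 <= A k om) /\ nu.-integrable setT (fun om => (A k om)%:E)) /\
  nu.-integrable setT (fun om => (complex.Re (ip x (Rinf ip P R0 om x)))%:E) /\
  (complex.Re (ip x (R0 x)))%:E
    = (Einf + \sum_(1 <= k <oo) \int[nu]_om (A k om)%:E)%E /\
  (\sum_(1 <= k <oo) \int[nu]_om (A k om)%:E)%E
    = ((complex.Re (ip x (R0 x)))%:E - Einf)%E /\
  (\sum_(1 <= k <oo) \int[nu]_om (A k om)%:E < +oo)%E.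
Proof.
move=> A Einf; have [hip hc] := hH.
set c := complex.Re (ip x (R0 x)).
pose f k (om : Omega n) := complex.Re (ip x (Rw ip P R0 (prefix om k) x)).
have f_bound k om : 0 <= f k om <= c := Re_ip_Rw_bound hip hc hP hR0 _ x.
pose g om := complex.Re (ip x (Rinf ip P R0 om x)).
have f_cvg om : f ^~ om @ \oo --> g om := Re_ip_Rinf_cvg hip hc hP hR0 (om := om) (v := x).
have f_meas k : measurable_fun setT (f k).
  exact: (prefix_measurable k (fun w => complex.Re (ip x (Rw ip P R0 w x)))).
have A_eq k om : A k.+1 om = f k om - f k.+1 om.
  by rewrite /f (Re_ip_Rw_prefixS hip hc hP hR0 om k x) addrC addKr.
have A_ge0 k om : 0 <= A k.+1 om by apply: ger0_Re; exact: Delta_psd.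
have g_int := limit_integrable nu f_meas f_bound f_cvg.
have sumE : (\sum_(1 <= k <oo) \int[nu]_om (A k om)%:E = c%:E - Einf)%E.
  have -> : c%:E = (\int[nu]_om (f 0%N om)%:E)%E.
    rewrite (eq_integral (fun _ => c%:E)) // integral_cst //.
    set X := (X in (_ * X)%E); have -> : X = 1%E by exact: probability_setT.
    by rewrite mule1.
  rewrite -(integral_telescope nu f_meas f_bound f_cvg).
  apply/congr_lim/funext => N; apply: eq_big_nat => -[//|k] _.
  by apply: eq_integral => om _; rewrite A_eq.
have Einf_fin : Einf \is a fin_num := integrable_fin_num measurableT g_int.
split; [case=> // k _; split => // | split => //].
  apply: (bounded_integrable nu (c := c)).
    exact: (prefix_measurable k.+1 (fun w => complex.Re (ip x (Dw ip P R0 w x)))).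
  move=> om; rewrite A_ge0 /= A_eq.
  by have := f_bound k om; have := f_bound k.+1 om; lra.
rewrite sumE -(fineK Einf_fin) -EFinB -EFinD addrC subrK.
by do 2!split=> //; exact: ltry.
Qed.
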